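(* There exist a financial system $S$ in the base model (all contracts of the same priority), a bank $v$ and a number $x>0$ such that: $S$ has exactly two solutions $r_1\neq r_2$, with $q_v(r_2)=0$; and the system $S'$ obtained from $S$ by replacing $e_v$ with $e_v+x$ (everything else unchanged) has exactly one solution $r'$, which satisfies $r'=r_1$ and $q'_v(r')>x$, where $q'_v$ is the payoff of $v$ in $S'$.
   Context: A financial system with payment priorities consists of: a finite set $V$ of banks; external assets $e_v\ge 0$ for each $v\in V$; a number $P\ge 1$ of priority levels; and a finite set of contracts, each of which is either a debt contract from a debtor $u$ to a creditor $v\neq u$ with weight $c>0$, or a credit default swap (CDS) from a debtor $u$ to a creditor $v\neq u$ in reference to a bank $w\notin\{u,v\}$ (the reference entity) with weight $c>0$. Every contract has a priority in $\{1,\dots,P\}$ (1 is the highest priority). It is assumed that every bank that is the reference entity of some CDS is the debtor of at least one debt contract of positive weight. Given a recovery rate vector $r\in[0,1]^V$: the liability of a contract $k$ is $l_k(r)=c$ if $k$ is a debt of weight $c$, and $l_k(r)=c\,(1-r_w)$ if $k$ is a CDS of weight $c$ in reference to $w$. For a bank $v$, $l_v(r)$ is the sum of the liabilities of the contracts with debtor $v$; $l_v^{(\rho)}(r)$ is the sum of the liabilities of contracts with debtor $v$ and priority $\rho$; and $l_v^{(\le\rho)}(r)=\sum_{i=1}^{\rho}l_v^{(i)}(r)$ (with $l_v^{(\le 0)}=0$). The payment on a contract $k$ with debtor $v$ and priority $\rho$ is $p_k(r)=l_k(r)\cdot\min\{1,\max\{0,(r_v l_v(r)-l_v^{(\le\rho-1)}(r))/l_v^{(\rho)}(r)\}\}$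 (and $p_k(r)=0$ if $l_v^{(\rho)}(r)=0$). The assets of $v$ are $a_v(r)=e_v+\sum_k p_k(r)$, summing over contracts $k$ with creditor $v$. A vector $r\in[0,1]^V$ is a solution (clearing vector) if for every $v\in V$: $r_v=1$ when $a_v(r)\ge l_v(r)$, and $r_v=a_v(r)/l_v(r)$ when $a_v(r)<l_v(r)$. The payoff of $v$ is $q_v(r)=\max\{a_v(r)-l_v(r),0\}$. When $P=1$, payments reduce to $p_k(r)=r_v\,l_k(r)$ (principle of proportionality); this is called the base model. *)

From Stdlib Require Import Reals Lra List Arith.
Open Scope R_scope.

(* Banks are the natural numbers 0 .. nbanks-1.
   A contract is a debt (cref = None) or a CDS in reference to bank w
   (cref = Some w). *)
Record contract := Contract {
  cdebtor : nat;
  ccreditor : nat;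
  cref : option nat;
  cweight : R;
  cprio : nat }.

Record system := System {
  nbanks : nat;
  ext : nat -> R;
  nprio : nat;
  contracts : list contract }.

Definition wf_contract (S : system) (k : contract) : Prop :=
  (cdebtor k < nbanks S)%nat /\ (ccreditor k < nbanks S)%nat /\
  cdebtor k <> ccreditor k /\ 0 < cweight k /\
  (1 <= cprio k <= nprio S)%nat /\
  match cref k with
  | None => True
  | Some w => (w < nbanks S)%nat /\ w <> cdebtor k /\ w <> ccreditor k
  end.

Definition wf_system (S : system) : Prop :=
  (1 <= nprio S)%nat /\
  (forall v, (v < nbanks S)%nat -> 0 <= ext S v) /\
  (forall k, In k (contracts S) -> wf_contract S k) /\
  (forall k w, In k (contracts S) -> cref k = Some w ->
     exists k', In k' (contracts S) /\ cdebtor k' = w /\ cref k' = None /\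
                0 < cweight k').

Definition base_model (S : system) : Prop := nprio S = 1%nat.

(* recovery rate vectors: functions nat -> R, only entries < nbanks matter *)
Definition liab (k : contract) (r : nat -> R) : R :=
  match cref k with
  | None => cweight k
  | Some w => cweight k * (1 - r w)
  end.

Definition sum_contracts (S : system) (f : contract -> R) : R :=
  fold_right (fun k acc => f k + acc) 0 (contracts S).

Definition lv (S : system) (v : nat) (r : nat -> R) : R :=
  sum_contracts S (fun k => if Nat.eqb (cdebtor k) v then liab k r else 0).

Definition lvp (S : system) (v rho : nat) (r : nat -> R) : R :=
  sum_contracts S (fun k =>
    if andb (Nat.eqb (cdebtor k) v) (Nat.eqb (cprio k) rho) then liab k r else 0).

Fixpoint lvle (Sy : system) (v rho : nat) (r : nat -> R) : R :=
  match rho with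
  | O => 0
  | Datatypes.S i => lvle Sy v i r + lvp Sy v (Datatypes.S i) r
  end.

Definition payment (S : system) (k : contract) (r : nat -> R) : R :=
  let v := cdebtor k in
  let rho := cprio k in
  if Req_EM_T (lvp S v rho r) 0 then 0
  else liab k r *
       Rmin 1 (Rmax 0 ((r v * lv S v r - lvle S v (rho - 1) r) / lvp S v rho r)).

Definition assets (S : system) (v : nat) (r : nat -> R) : R :=
  ext S v + sum_contracts S (fun k =>
    if Nat.eqb (ccreditor k) v then payment S k r else 0).

Definition is_solution (S : system) (r : nat -> R) : Prop :=
  forall v, (v < nbanks S)%nat ->
    0 <= r v <= 1 /\
    (assets S v r >= lv S v r -> r v = 1) /\
    (assets S v r < lv S v r -> r v = assets S v r / lv S v r).

Definition payoff (S : system) (v : nat) (r : nat -> R) : R :=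
  Rmax (assets S v r - lv S v r) 0.

(* equality of recovery vectors as elements of [0,1]^V *)
Definition same_vec (S : system) (r1 r2 : nat -> R) : Prop :=
  forall v, (v < nbanks S)%nat -> r1 v = r2 v.

Definition add_ext (S : system) (v : nat) (x : R) : system :=
  System (nbanks S) (fun u => if Nat.eqb u v then ext S u + x else ext S u)
         (nprio S) (contracts S).

(* Bank 0 owes a debt of 1 to bank 1 and has sold bank 2 a CDS of weight 3 on
   bank 1; bank 1 owes 1 to bank 2, and only bank 0 has external assets e.
   Bank 1 lives off bank 0's payment, so r_1 = r_0 =: t, and bank 0 owes
   1 + 3 (1 - t) = 4 - 3t.  A defaulting t therefore solves t (4 - 3t) = e.
   For e = 4/3 this quadratic has the double root 2/3, a second solution besides
   t = 1 in which bank 0 has payoff 0.  For e = 7/3 it has no real root, so t = 1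
   is the only solution, and there bank 0 keeps 7/3 - 1 = 4/3 > 1. *)

From Stdlib Require Import Reals Lra Psatz List.
Open Scope R_scope.

Lemma sum_contracts_ext (S : system) (f g : contract -> R) :
  (forall k, In k (contracts S) -> f k = g k) ->
  sum_contracts S f = sum_contracts S g.
Proof.
  unfold sum_contracts.
  induction (contracts S) as [|k ks IH]; intros Hfg; simpl; [reflexivity|].
  rewrite (Hfg k (or_introl eq_refl)), IH; [reflexivity|].
  intros k' Hk'. apply Hfg. right. exact Hk'.
Qed.

Definition single_priority (S : system) : Prop :=
  forall k, In k (contracts S) -> cprio k = 1%nat.

Lemma lvp_single_priority (S : system) (v : nat) (r : nat -> R) :
  single_priority S -> lvp S v 1 r = lv S v r.
Proof.
  intros Hs. apply sum_contracts_ext. intros k Hk.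
  rewrite (Hs k Hk), Bool.andb_true_r. reflexivity.
Qed.

Lemma payment_proportional (S : system) (k : contract) (r : nat -> R) :
  single_priority S -> In k (contracts S) ->
  lv S (cdebtor k) r <> 0 -> 0 <= r (cdebtor k) <= 1 ->
  payment S k r = r (cdebtor k) * liab k r.
Proof.
  intros Hs Hk Hl Hr. unfold payment.
  rewrite (Hs k Hk). simpl lvle. rewrite lvp_single_priority by exact Hs.
  destruct (Req_EM_T _ 0) as [H0|_]; [contradiction|].
  replace ((r (cdebtor k) * lv S (cdebtor k) r - 0) / lv S (cdebtor k) r)
    with (r (cdebtor k)) by (field; exact Hl).
  rewrite Rmax_right, Rmin_right by lra. ring.
Qed.

Lemma assets_proportional (S : system) (v : nat) (r : nat -> R) :
  single_priority S ->
  (forall k, In k (contracts S) ->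
     lv S (cdebtor k) r <> 0 /\ 0 <= r (cdebtor k) <= 1) ->
  assets S v r = ext S v + sum_contracts S (fun k =>
    if Nat.eqb (ccreditor k) v then r (cdebtor k) * liab k r else 0).
Proof.
  intros Hs Hdebtors. unfold assets. f_equal. apply sum_contracts_ext.
  intros k Hk. destruct (Nat.eqb (ccreditor k) v); [|reflexivity].
  destruct (Hdebtors k Hk). apply payment_proportional; assumption.
Qed.

Definition chain_contracts : list contract :=
  Contract 0 1 None 1 1 :: Contract 0 2 (Some 1%nat) 3 1 ::
  Contract 1 2 None 1 1 :: nil.

Definition chain_system (e : R) : system :=
  System 3 (fun u => if Nat.eqb u 0 then e else 0) 1 chain_contracts.

(* The two branches of the clearing condition of bank 0 once r_1 = r_0 = t. *)
Definition chain_clears (e t : R) : Prop :=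
  (e >= 4 - 3 * t /\ t = 1) \/ (e < 4 - 3 * t /\ t * (4 - 3 * t) = e).

Definition chain_vec (t : R) : nat -> R := fun u => if Nat.eqb u 2 then 1 else t.

(* [t (4 - 3t) = 4/3] is [(3t - 2)^2 = 0]. *)
Lemma chain_clears_four_thirds (t : R) :
  chain_clears (4/3) t -> t = 1 \/ t = 2/3.
Proof. intros [[_ Ht]|[_ Heq]]; [left; exact Ht | right; nra]. Qed.

(* [t (4 - 3t)] is at most [4/3], its value at [t = 2/3]. *)
Lemma chain_clears_above_four_thirds (e t : R) :
  4/3 < e -> chain_clears e t -> t = 1.
Proof.
  intros He [[_ Ht]|[_ Heq]]; [exact Ht|].
  assert (0 <= (3 * t - 2) ^ 2) by apply pow2_ge_0. nra.
Qed.

Section ChainSystem.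

Variable T : system.
Hypothesis contracts_T : contracts T = chain_contracts.
Hypothesis nbanks_T : nbanks T = 3%nat.
Hypothesis ext1_T : ext T 1 = 0.
Hypothesis ext2_T : ext T 2 = 0.

Lemma chain_single_priority : single_priority T.
Proof.
  intros k. rewrite contracts_T. simpl.
  intros [<-|[<-|[<-|[]]]]; reflexivity.
Qed.

Lemma chain_lv0 (r : nat -> R) : lv T 0 r = 4 - 3 * r 1%nat.
Proof. unfold lv, sum_contracts, liab. rewrite contracts_T. simpl. ring. Qed.

Lemma chain_lv1 (r : nat -> R) : lv T 1 r = 1.
Proof. unfold lv, sum_contracts, liab. rewrite contracts_T. simpl. ring. Qed.

Lemma chain_lv2 (r : nat -> R) : lv T 2 r = 0.
Proof. unfold lv, sum_contracts, liab. rewrite contracts_T. simpl. ring. Qed.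

Section Assets.

Variable r : nat -> R.
Hypothesis r0_bounds : 0 <= r 0%nat <= 1.
Hypothesis r1_bounds : 0 <= r 1%nat <= 1.

Lemma chain_assets (v : nat) :
  assets T v r = ext T v + sum_contracts T (fun k =>
    if Nat.eqb (ccreditor k) v then r (cdebtor k) * liab k r else 0).
Proof.
  apply assets_proportional; [exact chain_single_priority|].
  intros k. rewrite contracts_T. simpl.
  intros [<-|[<-|[<-|[]]]]; simpl;
    rewrite ?chain_lv0, ?chain_lv1; split; lra.
Qed.

Lemma chain_assets0 : assets T 0 r = ext T 0.
Proof. rewrite chain_assets. unfold sum_contracts. rewrite contracts_T. simpl. ring. Qed.

Lemma chain_assets1 : assets T 1 r = r 0%nat.
Proof.
  rewrite chain_assets. unfold sum_contracts, liab. rewrite contracts_T. simpl.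
  rewrite ext1_T. ring.
Qed.

Lemma chain_assets2 : assets T 2 r = 3 * (1 - r 1%nat) * r 0%nat + r 1%nat.
Proof.
  rewrite chain_assets. unfold sum_contracts, liab. rewrite contracts_T. simpl.
  rewrite ext2_T. ring.
Qed.

Lemma chain_payoff0 : payoff T 0 r = Rmax (ext T 0 - (4 - 3 * r 1%nat)) 0.
Proof. unfold payoff. rewrite chain_assets0, chain_lv0. reflexivity. Qed.

End Assets.

Lemma chain_same_vec (r : nat -> R) (t : R) :
  same_vec T r (chain_vec t) <-> r 0%nat = t /\ r 1%nat = t /\ r 2%nat = 1.
Proof.
  unfold same_vec, chain_vec. rewrite nbanks_T. split.
  - intros H. repeat split; apply H; lia.
  - intros (H0 & H1 & H2) [|[|[|v]]] Hv; simpl; (lia || assumption).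
Qed.

Lemma chain_solution_iff (r : nat -> R) :
  is_solution T r <->
  0 <= r 0%nat <= 1 /\ r 1%nat = r 0%nat /\ r 2%nat = 1 /\
  chain_clears (ext T 0) (r 0%nat).
Proof.
  unfold is_solution. rewrite nbanks_T. split.
  - intros Hsol.
    destruct (Hsol 0%nat ltac:(lia)) as [B0 [Solvent0 Default0]].
    destruct (Hsol 1%nat ltac:(lia)) as [B1 [Solvent1 Default1]].
    destruct (Hsol 2%nat ltac:(lia)) as [_ [Solvent2 _]].
    rewrite chain_lv0, chain_assets0 in Solvent0, Default0 by assumption.
    rewrite chain_lv1, chain_assets1 in Solvent1, Default1 by assumption.
    rewrite chain_lv2, chain_assets2 in Solvent2 by assumption.
    assert (E1 : r 1%nat = r 0%nat).
    { destruct (Rle_lt_dec 1 (r 0%nat)).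
      - rewrite Solvent1 by lra. lra.
      - rewrite Default1 by lra. field. }
    rewrite E1 in Solvent0, Default0.
    repeat split; [lra | lra | exact E1 | apply Solvent2; nra |].
    destruct (Rle_lt_dec (4 - 3 * r 0%nat) (ext T 0)).
    + left. split; [lra|]. apply Solvent0. lra.
    + right. split; [lra|].
      rewrite (Default0 ltac:(lra)) at 1. field. lra.
  - intros (B0 & E1 & E2 & Hclears) [|[|[|v]]] Hv; try lia.
    + rewrite chain_lv0, chain_assets0, E1 by lra.
      repeat split; try lra; intros; destruct Hclears as [[? ?]|[? Heq]]; try lra.
      rewrite <- Heq. field. lra.
    + rewrite chain_lv1, chain_assets1, E1 by lra.
      repeat split; intros; lra.
    + rewrite chain_lv2, chain_assets2, E1, E2 by lra.
      repeat split; intros; nra.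
Qed.


Lemma chain_vec_is_solution (t : R) :
  0 <= t <= 1 -> chain_clears (ext T 0) t -> is_solution T (chain_vec t).
Proof. intros Ht Hclears. apply chain_solution_iff. unfold chain_vec. simpl. auto. Qed.

Lemma chain_solution_shape (r : nat -> R) :
  is_solution T r ->
  same_vec T r (chain_vec (r 0%nat)) /\ chain_clears (ext T 0) (r 0%nat).
Proof.
  intros Hsol. apply chain_solution_iff in Hsol as (_ & E1 & E2 & Hclears).
  split; [apply chain_same_vec; auto | exact Hclears].
Qed.

Lemma chain_solutions_at_four_thirds (r : nat -> R) :
  ext T 0 = 4/3 -> is_solution T r ->
  same_vec T r (chain_vec 1) \/ same_vec T r (chain_vec (2/3)).
Proof.
  intros He Hsol. apply chain_solution_shape in Hsol as [Hshape Hclears].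
  rewrite He in Hclears.
  destruct (chain_clears_four_thirds _ Hclears) as [Ht|Ht]; rewrite Ht in Hshape; auto.
Qed.

Lemma chain_solution_above_four_thirds (r : nat -> R) :
  4/3 < ext T 0 -> is_solution T r -> same_vec T r (chain_vec 1).
Proof.
  intros He Hsol. apply chain_solution_shape in Hsol as [Hshape Hclears].
  rewrite (chain_clears_above_four_thirds _ _ He Hclears) in Hshape. exact Hshape.
Qed.

End ChainSystem.

Lemma chain_system_wf (e : R) : 0 <= e -> wf_system (chain_system e).
Proof.
  intros He. unfold wf_system; simpl. split; [|split; [|split]].
  - lia.
  - intros v _. destruct (Nat.eqb v 0); lra.
  - intros k Hk. destruct Hk as [<-|[<-|[<-|[]]]];
      unfold wf_contract; simpl; repeat split; (lia || lra).
  - intros k w Hk Hw. destruct Hk as [<-|[<-|[<-|[]]]]; try discriminate.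
    injection Hw as <-. exists (Contract 1 2 None 1 1). simpl.
    repeat split; auto. lra.
Qed.

Theorem mainTheorem6 :
  exists (S : system) (v : nat) (x : R),
    wf_system S /\ base_model S /\ (v < nbanks S)%nat /\ 0 < x /\
    exists r1 r2 : nat -> R,
      is_solution S r1 /\ is_solution S r2 /\ ~ same_vec S r1 r2 /\
      (forall r, is_solution S r -> same_vec S r r1 \/ same_vec S r r2) /\
      payoff S v r2 = 0 /\
      exists r' : nat -> R,
        is_solution (add_ext S v x) r' /\
        (forall r, is_solution (add_ext S v x) r -> same_vec S r r') /\
        same_vec S r' r1 /\
        payoff (add_ext S v x) v r' > x.
Proof.
  set (S := chain_system (4/3)). set (S' := add_ext S 0 1).
  assert (B1 : 0 <= 1 <= 1) by lra.
  assert (B23 : 0 <= 2/3 <= 1) by lra.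
  exists S, 0%nat, 1.
  split; [apply chain_system_wf; lra|].
  split; [reflexivity|]. split; [simpl; lia|]. split; [lra|].
  exists (chain_vec 1), (chain_vec (2/3)).
  split; [apply (chain_vec_is_solution S); simpl; auto; left; lra|].
  split; [apply (chain_vec_is_solution S); simpl; auto; right; lra|].
  split.
  { intros Hsame. specialize (Hsame 0%nat ltac:(simpl; lia)).
    unfold chain_vec in Hsame. simpl in Hsame. lra. }
  split; [intros r; apply chain_solutions_at_four_thirds; reflexivity|].
  split.
  { rewrite (chain_payoff0 S eq_refl); unfold chain_vec; simpl; [|lra|lra].
    apply Rmax_right. lra. }
  exists (chain_vec 1).
  split; [apply (chain_vec_is_solution S'); simpl; auto; left; lra|].
  split; [intros r; apply (chain_solution_above_four_thirds S'); simpl; (reflexivity || lra)|].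
  split; [intros v _; reflexivity|].
  rewrite (chain_payoff0 S' eq_refl); unfold chain_vec; simpl; [|lra|lra].
  rewrite Rmax_left; lra.
Qed.
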